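(* Every orthogonally convex polygon $P$ has exactly $4$ knobs; more precisely, $P$ has exactly one left knob, exactly one right knob, exactly one top knob and exactly one bottom knob.
   Context: An orthogonal polygon $P$ is orthogonally convex if it is a simply connected polygon with all edges parallel to the $x$- or $y$-axis and the intersection of every line parallel to the $x$-axis or $y$-axis with $P$ is a single (possibly empty) line segment. A vertex is convex if its interior angle is $90^\circ$. A knob is an edge $(v_i,v_{i+1})$ both of whose endpoints are convex. A vertical knob is a left knob if points immediately to its left are outside $P$, and a right knob otherwise; a horizontal knob is a top knob if points immediately above it are outside $P$, and a bottom knob otherwise. *)

From HB Require Import structures.
From mathcomp Require Import all_boot all_order all_algebra.
Set Implicit Arguments. Unset Strict Implicit. Unset Printing Implicit Defensive.
Import Order.TTheory GRing.Theory Num.Theory.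
Local Open Scope ring_scope.

Section Polygon.
Variables (R : realFieldType) (n : nat) (v : 'I_n -> R * R).

Definition vx (i : 'I_n) : R := (v i).1.
Definition vy (i : 'I_n) : R := (v i).2.

(* edge i is the segment (v i, v (ordS i)) *)
Definition vert_edge (i : 'I_n) : Prop :=
  vx i = vx (ordS i) /\ vy i <> vy (ordS i).
Definition horiz_edge (i : 'I_n) : Prop :=
  vy i = vy (ordS i) /\ vx i <> vx (ordS i).

(* orthogonal polygon: every edge axis-parallel, consecutive edges perpendicular
   (so every vertex is a genuine corner) *)
Definition rectilinear : Prop :=
  forall i : 'I_n,
    (vert_edge i /\ horiz_edge (ordS i)) \/ (horiz_edge i /\ vert_edge (ordS i)).

Definition on_edge (p : R * R) (i : 'I_n) : Prop :=
  exists t : R, 0 <= t <= 1 /\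
    p = ((1 - t) * vx i + t * vx (ordS i), (1 - t) * vy i + t * vy (ordS i)).

Definition simple_polygon : Prop :=
  forall (i j : 'I_n) (p : R * R), i <> j -> on_edge p i -> on_edge p j ->
    (j = ordS i /\ p = v j) \/ (i = ordS j /\ p = v i).

Definition boundary (p : R * R) : Prop := exists i, on_edge p i.

(* interior by ray casting: the horizontal ray to the right of p crosses an
   odd number of vertical edges (half-open convention in y) *)
Definition crossings (p : R * R) : {set 'I_n} :=
  [set i : 'I_n | [&& vx i == vx (ordS i), p.1 < vx i,
                      Num.min (vy i) (vy (ordS i)) <= p.2
                    & p.2 < Num.max (vy i) (vy (ordS i))]].

Definition interior (p : R * R) : Prop :=
  ~ boundary p /\ odd #|crossings p|.

Definition inP (p : R * R) : Prop := boundary p \/ interior p.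

Definition ortho_convex : Prop :=
  (forall c x1 x2 x : R, inP (x1, c) -> inP (x2, c) -> x1 <= x <= x2 -> inP (x, c))
  /\ (forall c y1 y2 y : R, inP (c, y1) -> inP (c, y2) -> y1 <= y <= y2 -> inP (c, y)).

Definition orthogonally_convex_polygon : Prop :=
  (4 <= n)%N /\ rectilinear /\ simple_polygon /\ ortho_convex.

(* vertex i is convex: interior angle 90 degrees, i.e. the open quadrant
   spanned by the two incident edges is locally inside P *)
Definition convex_vertex (i : 'I_n) : Prop :=
  exists2 eps : R, 0 < eps & forall s t : R, 0 < s < eps -> 0 < t < eps ->
    interior (vx i + s * (vx (ord_pred i) - vx i) + t * (vx (ordS i) - vx i),
              vy i + s * (vy (ord_pred i) - vy i) + t * (vy (ordS i) - vy i)).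

Definition knob (i : 'I_n) : Prop := convex_vertex i /\ convex_vertex (ordS i).

Definition left_outside (i : 'I_n) : Prop :=
  exists2 eps : R, 0 < eps & forall t y : R, 0 < t < eps ->
    Num.min (vy i) (vy (ordS i)) < y < Num.max (vy i) (vy (ordS i)) ->
    ~ inP (vx i - t, y).
Definition above_outside (i : 'I_n) : Prop :=
  exists2 eps : R, 0 < eps & forall t x : R, 0 < t < eps ->
    Num.min (vx i) (vx (ordS i)) < x < Num.max (vx i) (vx (ordS i)) ->
    ~ inP (x, vy i + t).

Definition left_knob (i : 'I_n) : Prop := knob i /\ vert_edge i /\ left_outside i.
Definition right_knob (i : 'I_n) : Prop := knob i /\ vert_edge i /\ ~ left_outside i.
Definition top_knob (i : 'I_n) : Prop := knob i /\ horiz_edge i /\ above_outside i.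
Definition bottom_knob (i : 'I_n) : Prop := knob i /\ horiz_edge i /\ ~ above_outside i.

End Polygon.

(* Ray casting decides interiority by the parity of the vertical edges crossed by the
   rightward ray from a point. Since vertical and horizontal edges alternate, every vertex
   is an endpoint of exactly one vertical edge, so this parity is that of the number of
   vertices strictly to the right of and weakly below the point. It changes only when the
   point crosses a vertex coordinate, and then according to the edges at that vertex, so
   convexity of a vertex and the side of an edge facing the exterior become local parity
   computations: a vertical edge has the exterior on its left exactly when the horizontal
   edge at a convex endpoint goes to the right.
   Hence the vertical edge through a leftmost vertex is a left knob. Orthogonal convexity
   forbids vertices weakly left of and strictly below the lower end of a left knob (the
   boundary would have to leave that quadrant through its top or its right side), and
   symmetrically above its upper end. So the vertical span of a left knob contains the span
   of every left knob further left, and a horizontal segment of P joining the two edges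
   contradicts the exterior lying immediately left of the right one. Top, bottom and right
   knobs are left knobs of the polygon turned by a quarter or a half turn. *)

From mathcomp Require Import all_boot all_order all_algebra.
From mathcomp Require Import ring lra.
Set Implicit Arguments. Unset Strict Implicit. Unset Printing Implicit Defensive.
Import Order.TTheory GRing.Theory Num.Theory.
Local Open Scope ring_scope.

Section RealFacts.
Variable R : realFieldType.
Implicit Types a b c x y : R.

Definition between a b c : Prop := (a <= c <= b) \/ (b <= c <= a).

Lemma betweenC a b c : between a b c -> between b a c.
Proof. by case=> h; [right|left]. Qed.

Lemma between_id a c : between a a c -> c = a.
Proof. by case=> /andP [h1 h2]; apply/eqP; rewrite eq_le h2 h1. Qed.

Lemma between_comb a b t : 0 <= t <= 1 -> between a b ((1 - t) * a + t * b).
Proof. by move=> /andP [t0 t1]; case: (lerP a b) => ab; [left|right]; apply/andP; split; nra. Qed.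

Lemma between_combP a b c : a != b -> between a b c ->
  exists2 t, 0 <= t <= 1 & c = (1 - t) * a + t * b.
Proof.
move=> ab h; have ba0 : b - a != 0 by rewrite subr_eq0 eq_sym.
exists ((c - a) / (b - a)); last by field.
case: (ltrgtP a b) => [lt|gt|eq]; last by rewrite eq eqxx in ab.
  have ba : 0 < b - a by rewrite subr_gt0.
  by rewrite ler_pdivrMr // mul1r divr_ge0 /=; case: h => /andP []; lra.
have ab' : 0 < a - b by rewrite subr_gt0.
rewrite -(divrNN (c - a)) !opprB ler_pdivrMr // mul1r divr_ge0 /=; case: h => /andP []; lra.
Qed.

Lemma in_minmax_addb a b y :
  (Num.min a b <= y < Num.max a b) = (a <= y) (+) (b <= y).
Proof. by rewrite ge_min lt_max !ltNge; case: (a <= y); case: (b <= y). Qed.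

Lemma in_minmaxP a b y :
  reflect ((a < y < b) \/ (b < y < a)) (Num.min a b < y < Num.max a b).
Proof.
rewrite gt_min lt_max; apply: (iffP andP) => [[h1 h2]|[] /andP [h1 h2]].
- by case: (ltP a y) h1 => ha /= h1; case: (ltP y b) h2 => hb /= h2; [left|right|right|]; lra.
- by rewrite h1 h2 orbT.
- by rewrite h1 h2 orbT.
Qed.

Lemma in_minmaxN a b y :
  Num.min a b < y < Num.max a b -> Num.min (- a) (- b) < - y < Num.max (- a) (- b).
Proof. by move/in_minmaxP => h; apply/in_minmaxP; lra. Qed.

Lemma lt_addb_itv x y a : x <= y -> (x < a) (+) (y < a) = (x < a <= y).
Proof. by move=> h; case: (ltP x a) => h1; case: (ltP y a) => h2 //=; lra. Qed.

Lemma le_addb_itv x y a : x <= y -> (a <= x) (+) (a <= y) = (x < a <= y).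
Proof. by move=> h; case: (leP a x) => h1; case: (leP a y) => h2 //=; lra. Qed.

Lemma exists_lt2 x y : 0 < x -> 0 < y -> exists a, [/\ 0 < a, a < x & a < y].
Proof.
move=> x0 y0; exists (Num.min x y / 2).
have mx : Num.min x y <= x by rewrite ge_min lexx.
have my : Num.min x y <= y by rewrite ge_min lexx orbT.
have m0 : 0 < Num.min x y by rewrite lt_min x0 y0.
by split; lra.
Qed.

Lemma small_scale c e : 0 < e -> exists2 a0, 0 < a0 & forall a, 0 < a < a0 -> - e < a * c < e.
Proof.
move=> e0; case: (lerP 0 c) => c0.
  exists (e / (c + 1)); first by apply: divr_gt0; lra.
  by move=> a /andP [a0]; rewrite ltr_pdivlMr; [move=> h; apply/andP; split; nra | lra].
exists (e / (1 - c)); first by apply: divr_gt0; lra.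
by move=> a /andP [a0]; rewrite ltr_pdivlMr; [move=> h; apply/andP; split; nra | lra].
Qed.

Lemma fin_pos_lower_bound (T : finType) (f : T -> R) (P : pred T) :
  (forall t, P t -> 0 < f t) -> exists2 d, 0 < d & forall t, P t -> d <= f t.
Proof.
move=> f_gt0; case: (pickP P) => [t0 Pt0|P0]; last by exists 1 => // t; rewrite P0.
by case: (arg_minP f Pt0) => t Pt t_min; exists (f t); [apply: f_gt0 | apply: t_min].
Qed.

End RealFacts.

Lemma iter_ordS n (i : 'I_n) m : val (iter m (@ordS n) i) = ((i + m) %% n)%N.
Proof.
elim: m => [|m IH] /=; first by rewrite addn0 modn_small.
by rewrite IH -addn1 modnDml addn1 addnS.
Qed.

Lemma ordS_exit n (Q : pred 'I_n) i j : Q i -> ~~ Q j -> exists k, Q k && ~~ Q (ordS k).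
Proof.
move=> Qi nQj; apply/existsP; apply: contraT => /existsPn Qclosed.
have Q_iter m : Q (iter m (@ordS n) i).
  by elim: m => [|m IH] //=; move: (Qclosed (iter m (@ordS n) i)); rewrite IH negbK.
have reach : iter (j + n - i) (@ordS n) i = j.
  apply: val_inj; rewrite iter_ordS subnKC ?modnDr ?modn_small //.
  exact: leq_trans (ltnW (ltn_ord i)) (leq_addl _ _).
by move: (Q_iter (j + n - i)%N); rewrite reach (negbTE nQj).
Qed.

Section Xorsum.
Variable n : nat.
Implicit Types S T U e : pred 'I_n.

Definition xorsum S : bool := \big[addb/false]_(i : 'I_n) S i.

Lemma xorsumD S T : xorsum (fun i => S i (+) T i) = xorsum S (+) xorsum T.
Proof. exact: big_split. Qed.

Lemma eq_xorsum S T : S =1 T -> xorsum S = xorsum T.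
Proof. by move=> eST; apply: eq_bigr => i _; rewrite eST. Qed.

Lemma xorsum_pred0 S : S =1 pred0 -> xorsum S = false.
Proof. by move=> S0; rewrite /xorsum big1 // => i _; rewrite S0. Qed.

Lemma xorsum_pred1 S k : (forall i, S i -> i = k) -> xorsum S = S k.
Proof.
move=> Sk; rewrite /xorsum (bigD1 k) //= big1 ?addbF // => i /eqP ik.
by apply: contra_notF ik => /Sk.
Qed.

Lemma odd_card_xorsum S : odd #|[set i | S i]| = xorsum S.
Proof.
rewrite cardsE -sum1_card big_mkcond /=.
rewrite (big_morph odd (id1 := false) (op1 := addb)) //; last by move=> x y; rewrite oddD.
by apply: eq_bigr => i _; rewrite unfold_in; case: (S i).
Qed.

Lemma xorsum_split S T U :
  xorsum (fun i => S i (+) T i) = xorsum U -> xorsum S = xorsum T (+) xorsum U.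
Proof. by rewrite xorsumD => <-; rewrite addbC addbK. Qed.

Lemma xorsum_eq S T : xorsum (fun i => S i (+) T i) = false -> xorsum S = xorsum T.
Proof. by rewrite xorsumD; case: (xorsum S); case: (xorsum T). Qed.

(* Every index [j] is an endpoint of exactly one [e]-edge: [j] if [e j], else [ord_pred j]. *)
Lemma xorsum_alternating e : (forall i, e (ord_pred i) = ~~ e i) ->
  forall S, xorsum S = xorsum (fun i => e i && (S i (+) S (ordS i))).
Proof.
move=> e_alt S.
rewrite [RHS](eq_xorsum (T := fun i => (e i && S i) (+) (e i && S (ordS i)))); last first.
  by move=> i /=; case: (e i).
rewrite xorsumD [xorsum (fun i => e i && S (ordS i))](reindex_inj (@ord_pred_inj n)) /=.
rewrite -xorsumD; apply: eq_xorsum => i /=.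
by rewrite ord_predK e_alt; case: (e i); case: (S i).
Qed.

End Xorsum.

Section Rectilinear.
Variables (R : realFieldType) (n : nat) (v : 'I_n -> R * R).

Definition vertb (i : 'I_n) : bool := vx v i == vx v (ordS i).
Definition horizb (i : 'I_n) : bool := vy v i == vy v (ordS i).
Definition lower_right (p : R * R) (u : 'I_n) : bool := (p.1 < vx v u) && (vy v u <= p.2).

Lemma vertexE i : v i = (vx v i, vy v i).
Proof. by rewrite /vx /vy; case: (v i). Qed.

Lemma inP_on_edge p i : on_edge v p i -> inP v p.
Proof. by move=> pi; left; exists i. Qed.

Hypothesis rect : rectilinear v.

Lemma vertbP i : reflect (vert_edge v i) (vertb i).
Proof.
apply: (iffP eqP) => [ex|[]//]; split=> //.
by case: (rect i) => -[[]] //; rewrite ex.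
Qed.

Lemma horizbP i : reflect (horiz_edge v i) (horizb i).
Proof.
apply: (iffP eqP) => [ey|[]//]; split=> //.
by case: (rect i) => -[[]] //; rewrite ey.
Qed.

Lemma horizbNvertb i : horizb i = ~~ vertb i.
Proof. by rewrite /horizb /vertb; case: (rect i) => -[[e /eqP/negbTE ne] _]; rewrite e eqxx ne. Qed.

Lemma vertb_pred i : vertb (ord_pred i) = ~~ vertb i.
Proof.
rewrite -horizbNvertb /horizb /vertb.
move: (rect (ord_pred i)); rewrite /vert_edge /horiz_edge ord_predK.
by case=> -[[e /eqP/negbTE ne] [e' /eqP/negbTE ne']]; rewrite ?ne ?ne' ?e ?e' ?eqxx.
Qed.

Lemma horizb_pred i : horizb (ord_pred i) = ~~ horizb i.
Proof. by rewrite !horizbNvertb vertb_pred. Qed.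

Lemma odd_crossings p : odd #|crossings v p| = xorsum (lower_right p).
Proof.
rewrite /crossings odd_card_xorsum (xorsum_alternating vertb_pred (lower_right p)).
apply: eq_xorsum => i /=; rewrite /vertb /lower_right; case: eqP => //= ->.
by rewrite in_minmax_addb; case: (p.1 < _).
Qed.

Lemma interiorE p : interior v p <-> ~ boundary v p /\ xorsum (lower_right p).
Proof. by rewrite /interior odd_crossings. Qed.

Lemma xorsum_vx (X : pred R) : xorsum (fun u => X (vx v u)) = false.
Proof.
rewrite (xorsum_alternating vertb_pred); apply: xorsum_pred0 => f /=.
by rewrite /vertb; case: eqP => //= ->; rewrite addbb.
Qed.

Lemma xorsum_vy (Y : pred R) : xorsum (fun u => Y (vy v u)) = false.
Proof.
rewrite (xorsum_alternating horizb_pred); apply: xorsum_pred0 => f /=.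
by rewrite /horizb; case: eqP => //= ->; rewrite addbb.
Qed.

Lemma xorsum_hmove x1 x2 y : x1 <= x2 ->
  xorsum (lower_right (x1, y)) = xorsum (lower_right (x2, y)) (+)
    xorsum (fun f => vertb f && (x1 < vx v f <= x2)
                     && ((vy v f <= y) (+) (vy v (ordS f) <= y))).
Proof.
move=> le12; apply: xorsum_split; rewrite (xorsum_alternating vertb_pred).
apply: eq_xorsum => f /=; rewrite /lower_right /vertb /=; case: eqP => //= ->.
rewrite -(lt_addb_itv _ le12).
by case: (x1 < _); case: (x2 < _); case: (vy v f <= y); case: (_ <= y).
Qed.

Lemma xorsum_vmove x y1 y2 : y1 <= y2 ->
  xorsum (lower_right (x, y1)) = xorsum (lower_right (x, y2)) (+)
    xorsum (fun f => horizb f && (y1 < vy v f <= y2)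
                     && ((x < vx v f) (+) (x < vx v (ordS f)))).
Proof.
move=> le12; apply: xorsum_split; rewrite (xorsum_alternating horizb_pred).
apply: eq_xorsum => f /=; rewrite /lower_right /horizb /=; case: eqP => //= ->.
rewrite -(le_addb_itv _ le12).
by case: (x < _); case: (x < _); case: (_ <= y1); case: (_ <= y2).
Qed.

Lemma on_edge_between p i : on_edge v p i ->
  between (vx v i) (vx v (ordS i)) p.1 /\ between (vy v i) (vy v (ordS i)) p.2.
Proof. by case=> t [t01 ->] /=; split; apply: between_comb. Qed.

Lemma between_on_edge p i : between (vx v i) (vx v (ordS i)) p.1 ->
  between (vy v i) (vy v (ordS i)) p.2 -> on_edge v p i.
Proof.
case: p => x y /= hx hy; case: (rect i) => -[[e ne] _].
  rewrite -e in hx; rewrite (between_id hx).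
  have [t t01 ->] := between_combP (introN eqP ne) hy.
  by exists t; split => //; rewrite -e; congr pair; ring.
rewrite -e in hy; rewrite (between_id hy).
have [t t01 ->] := between_combP (introN eqP ne) hx.
by exists t; split => //; rewrite -e; congr pair; ring.
Qed.

Lemma on_edge_vertex i : on_edge v (v i) i.
Proof. by exists 0; rewrite lexx ler01 vertexE; split => //; congr pair; ring. Qed.

Lemma vertexS_neq i : v i <> v (ordS i).
Proof. by move=> e; case: (rect i) => -[[_ []]]; rewrite /vx /vy e. Qed.

Lemma xorsum_upper_right x y :
  xorsum (fun u => (x < vx v u) && (y <= vy v u)) = xorsum (fun u => (x < vx v u) && (vy v u < y)).
Proof.
apply: xorsum_eq; rewrite -(xorsum_vx (fun a => x < a)); apply: eq_xorsum => u /=.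
by rewrite [vy v u < y]ltNge; case: (x < _); case: (y <= _).
Qed.

Lemma xorsum_lower_left x y :
  xorsum (fun u => (vx v u <= x) && (vy v u < y)) = xorsum (fun u => (x < vx v u) && (vy v u < y)).
Proof.
apply: xorsum_eq; rewrite -(xorsum_vy (fun a => a < y)); apply: eq_xorsum => u /=.
by rewrite [vx v u <= x]leNgt; case: (x < _); case: (_ < y).
Qed.

Lemma xorsum_lower_right_strict p : ~ boundary v p ->
  xorsum (fun u => (p.1 < vx v u) && (vy v u < p.2)) = xorsum (lower_right p).
Proof.
move=> pNb; apply: xorsum_eq; rewrite (xorsum_alternating horizb_pred).
apply: xorsum_pred0 => f /=; rewrite /lower_right /horizb; case: eqP => //= ef.
rewrite -ef; case: (ltrgtP (vy v f) p.2) => /= h; try by case: (_ < _); case: (_ < _).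
apply/negbTE/negP => cross; apply: pNb; exists f; apply: between_on_edge.
  by case: (ltP p.1 (vx v f)) cross => h1; case: (ltP p.1 (vx v (ordS f))) => h2 //= _;
     [right|left]; apply/andP; split => //; apply: ltW.
by rewrite -ef h; left; rewrite lexx.
Qed.

End Rectilinear.

Section Corners.
Variables (R : realFieldType) (n : nat) (v : 'I_n -> R * R).

(* Exactly one vertical and one horizontal edge meet at a vertex [w]: [vedge w] and
   [hedge w], whose other endpoints are [vnbr w] and [hnbr w]. *)
Definition vedge w := if vertb v w then w else ord_pred w.
Definition hedge w := if vertb v w then ord_pred w else w.
Definition vnbr w := if vertb v w then ordS w else ord_pred w.
Definition hnbr w := if vertb v w then ord_pred w else ordS w.

Lemma vedge_ends w :
  (vedge w = w /\ ordS (vedge w) = vnbr w) \/ (vedge w = vnbr w /\ ordS (vedge w) = w).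
Proof. by rewrite /vedge /vnbr; case: ifP => _; [left|right]; rewrite ?ord_predK. Qed.

Lemma hedge_ends w :
  (hedge w = w /\ ordS (hedge w) = hnbr w) \/ (hedge w = hnbr w /\ ordS (hedge w) = w).
Proof. by rewrite /hedge /hnbr; case: ifP => _; [right|left]; rewrite ?ord_predK. Qed.

Lemma vedge_id i : vertb v i -> vedge i = i.
Proof. by rewrite /vedge => ->. Qed.

Hypothesis rect : rectilinear v.

Lemma vedge_vert w : vertb v (vedge w).
Proof. by rewrite /vedge; case: ifP => // /negbT; rewrite vertb_pred. Qed.

Lemma hedge_horiz w : horizb v (hedge w).
Proof. by rewrite /hedge (horizbNvertb rect); case: ifP => h; rewrite ?(vertb_pred rect) ?negbK h. Qed.

Lemma vnbr_x w : vx v (vnbr w) = vx v w.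
Proof. by have /eqP := vedge_vert w; case: (vedge_ends w) => -[-> ->]. Qed.

Lemma hnbr_y w : vy v (hnbr w) = vy v w.
Proof. by have /eqP := hedge_horiz w; case: (hedge_ends w) => -[-> ->]. Qed.

Lemma vnbr_y w : vy v (vnbr w) <> vy v w.
Proof.
have /(vertbP rect) [_] := vedge_vert w.
by case: (vedge_ends w) => -[-> ->] // ne /esym.
Qed.

Lemma hnbr_x w : vx v (hnbr w) <> vx v w.
Proof.
have /(horizbP rect) [_] := hedge_horiz w.
by case: (hedge_ends w) => -[-> ->] // ne /esym.
Qed.

Lemma vedge_x w : vx v (vedge w) = vx v w.
Proof. by case: (vedge_ends w) => -[-> _]; rewrite ?vnbr_x. Qed.

Lemma hedge_y w : vy v (hedge w) = vy v w.
Proof. by case: (hedge_ends w) => -[-> _]; rewrite ?hnbr_y. Qed.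

Lemma on_hedge w p : between (vx v w) (vx v (hnbr w)) p.1 -> p.2 = vy v w ->
  on_edge v p (hedge w).
Proof.
move=> px py; apply: (between_on_edge rect).
  by case: (hedge_ends w) => -[-> ->] //; apply: betweenC.
by case: (hedge_ends w) => -[-> ->]; rewrite py ?hnbr_y; left; rewrite lexx.
Qed.

Lemma not_boundary_off_grid p : (forall u, vx v u <> p.1) -> (forall u, vy v u <> p.2) ->
  ~ boundary v p.
Proof.
move=> px py [i /on_edge_between [bx b_y]].
case: (rect i) => -[[e _] _].
  by rewrite -e in bx; apply: (px i); rewrite (between_id bx).
by rewrite -e in b_y; apply: (py i); rewrite (between_id b_y).
Qed.

Hypothesis simp : simple_polygon v.

Lemma on_two_edges i f p : on_edge v p i -> on_edge v p f -> f <> i ->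
  p = v i \/ p = v (ordS i).
Proof. by move=> pi pf fi; case: (simp (nesym fi) pi pf) => [[-> ->]|[_ ->]]; [right|left]. Qed.

Lemma edges_at_vertex w f : on_edge v (v w) f -> f = w \/ f = ord_pred w.
Proof.
move=> wf; case: (f =P w) => [->|fw]; first by left.
case: (simp (nesym fw) (on_edge_vertex v w) wf) => [[ef e]|[wS _]].
  by case: (vertexS_neq rect (i := w)); rewrite e ef.
by right; rewrite wS ordSK.
Qed.

Lemma vedge_unique w f : vertb v f -> on_edge v (v w) f -> f = vedge w.
Proof.
move=> vf /edges_at_vertex [|] fE; subst f; rewrite /vedge; first by rewrite vf.
by move: vf; rewrite (vertb_pred rect) => /negbTE ->.
Qed.

Lemma hedge_unique w f : horizb v f -> on_edge v (v w) f -> f = hedge w.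
Proof.
rewrite (horizbNvertb rect) => hf /edges_at_vertex [|] fE; subst f; rewrite /hedge.
  by rewrite (negbTE hf).
by move: hf; rewrite (vertb_pred rect) negbK => ->.
Qed.

End Corners.

Section Gap.
Variables (R : realFieldType) (n : nat) (v : 'I_n -> R * R).

Definition coord_gap (d : R) : Prop := [/\ 0 < d,
  forall u w, vx v u < vx v w -> d <= vx v w - vx v u &
  forall u w, vy v u < vy v w -> d <= vy v w - vy v u].

Lemma coord_gap_exists : exists d, coord_gap d.
Proof.
have pos_diff (c : 'I_n -> R) (p : 'I_n * 'I_n) : c p.1 < c p.2 -> 0 < c p.2 - c p.1.
  by rewrite subr_gt0.
have [dx dx0 hx] := fin_pos_lower_bound (pos_diff (vx v)).
have [dy dy0 hy] := fin_pos_lower_bound (pos_diff (vy v)).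
exists (Num.min dx dy); split; first by rewrite lt_min dx0 dy0.
  by move=> u w h; apply: le_trans (hx (u, w) h); rewrite ge_min lexx.
by move=> u w h; apply: le_trans (hy (u, w) h); rewrite ge_min lexx orbT.
Qed.

Variable d : R.
Hypothesis gd : coord_gap d.

Lemma gap_gt0 : 0 < d.
Proof. by case: gd. Qed.

Lemma gap_vx u w : vx v w - d < vx v u -> vx v u < vx v w + d -> vx v u = vx v w.
Proof.
case: gd => _ gx _ h1 h2.
by case: (ltrgtP (vx v u) (vx v w)) => // /gx; lra.
Qed.

Lemma gap_vy u w : vy v w - d < vy v u -> vy v u < vy v w + d -> vy v u = vy v w.
Proof.
case: gd => _ _ gy h1 h2.
by case: (ltrgtP (vy v u) (vy v w)) => // /gy; lra.
Qed.

Lemma gap_le_vx u w x : vx v u <= x -> x < vx v w + d -> vx v u <= vx v w.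
Proof. by case: gd => _ gx _ h1 h2; case: lerP => // /gx; lra. Qed.

Lemma gap_ge_vx u w x : x < vx v u -> vx v w - d < x -> vx v w <= vx v u.
Proof. by case: gd => _ gx _ h1 h2; case: lerP => // /gx; lra. Qed.

Lemma gap_le_vy u w y : vy v u <= y -> y < vy v w + d -> vy v u <= vy v w.
Proof. by case: gd => _ _ gy h1 h2; case: lerP => // /gy; lra. Qed.

Lemma gap_ge_vy u w y : y < vy v u -> vy v w - d < y -> vy v w <= vy v u.
Proof. by case: gd => _ _ gy h1 h2; case: lerP => // /gy; lra. Qed.

Lemma gap_between_vx f g w r : 0 < r < d ->
  between (vx v f) (vx v g) (vx v w - r) -> between (vx v f) (vx v g) (vx v w).
Proof.
have [_ gx _] := gd; move=> /andP [r0 rd] b.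
case: (ltP (vx v f) (vx v w)) => hf; case: (ltP (vx v g) (vx v w)) => hg.
- by have := gx _ _ hf; have := gx _ _ hg; case: b => /andP []; lra.
- by left; rewrite (ltW hf) hg.
- by right; rewrite (ltW hg) hf.
- by case: b => /andP []; lra.
Qed.

Lemma straddle_vx f g w x : (x < vx v f) (+) (x < vx v g) ->
  vx v w - d < x -> x < vx v w + d -> between (vx v f) (vx v g) (vx v w).
Proof.
move=> s h1 h2; case: (ltP x (vx v f)) s => hf; case: (ltP x (vx v g)) => hg //= _.
  by right; rewrite (gap_le_vx hg h2) (gap_ge_vx hf h1).
by left; rewrite (gap_le_vx hf h2) (gap_ge_vx hg h1).
Qed.

Lemma straddle_vy f g w y : (vy v f <= y) (+) (vy v g <= y) ->
  vy v w - d < y -> y < vy v w + d -> between (vy v f) (vy v g) (vy v w).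
Proof.
move=> s h1 h2; case: (leP (vy v f) y) s => hf; case: (leP (vy v g) y) => hg //= _.
  by left; rewrite (gap_le_vy hf h2) (gap_ge_vy hg h1).
by right; rewrite (gap_le_vy hg h2) (gap_ge_vy hf h1).
Qed.

End Gap.

Section VertexCrossing.
Variables (R : realFieldType) (n : nat) (v : 'I_n -> R * R).
Hypotheses (rect : rectilinear v) (simp : simple_polygon v).
Variable d : R.
Hypothesis gd : coord_gap v d.

Lemma xorsum_cross_vedge w x1 x2 y :
  vx v w - d < x1 -> x1 < vx v w -> vx v w <= x2 -> x2 < vx v w + d ->
  vy v w - d < y -> y < vy v w + d ->
  xorsum (lower_right v (x1, y)) =
    xorsum (lower_right v (x2, y)) (+) ((vy v w <= y) (+) (vy v (vnbr v w) <= y)).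
Proof.
move=> x1l x1r x2l x2r yl yr.
rewrite (xorsum_hmove rect _ (x1 := x1) (x2 := x2)); last by lra.
congr addb; rewrite (xorsum_pred1 (k := vedge v w)).
  rewrite (vedge_vert rect) (vedge_x rect) x1r x2l /=.
  by case: (vedge_ends v w) => -[-> ->] //; rewrite addbC.
move=> f /andP [/andP [vf /andP [f1 f2]] st].
apply: (vedge_unique rect simp) => //; rewrite vertexE; apply: (between_on_edge rect) => /=.
  have fw : vx v f = vx v w by apply: (gap_vx gd); lra.
  by rewrite -(eqP vf) fw; left; rewrite lexx.
exact: straddle_vy st yl yr.
Qed.

Lemma xorsum_cross_hedge w x y1 y2 :
  vx v w - d < x -> x < vx v w + d ->
  vy v w - d < y1 -> y1 < vy v w -> vy v w <= y2 -> y2 < vy v w + d ->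
  xorsum (lower_right v (x, y1)) =
    xorsum (lower_right v (x, y2)) (+) ((x < vx v w) (+) (x < vx v (hnbr v w))).
Proof.
move=> xl xr y1l y1r y2l y2r.
rewrite (xorsum_vmove rect _ (y1 := y1) (y2 := y2)); last by lra.
congr addb; rewrite (xorsum_pred1 (k := hedge v w)).
  rewrite (hedge_horiz rect) (hedge_y rect) y1r y2l /=.
  by case: (hedge_ends v w) => -[-> ->] //; rewrite addbC.
move=> f /andP [/andP [hf /andP [f1 f2]] st].
apply: (hedge_unique rect simp) => //; rewrite vertexE; apply: (between_on_edge rect) => /=.
  exact: straddle_vx st xl xr.
have fw : vy v f = vy v w by apply: (gap_vy gd); lra.
by rewrite -(eqP hf) fw; left; rewrite lexx.
Qed.

Lemma near_vertex_not_boundary w s t : s != 0 -> t != 0 ->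
  - d < s < d -> - d < t < d -> ~ boundary v (vx v w + s, vy v w + t).
Proof.
move=> /eqP s0 /eqP t0 /andP [s1 s2] /andP [t1 t2]; apply: (not_boundary_off_grid rect) => u /= e.
  have := gap_vx gd (u := u) (w := w); rewrite e => /(_ ltac:(lra) ltac:(lra)).
  by move=> h; apply: s0; lra.
have := gap_vy gd (u := u) (w := w); rewrite e => /(_ ltac:(lra) ltac:(lra)).
by move=> h; apply: t0; lra.
Qed.

End VertexCrossing.

Section ConvexCorner.
Variables (R : realFieldType) (n : nat) (v : 'I_n -> R * R).

(* The open quadrant of [convex_vertex], parametrised along the horizontal edge by [a]
   and along the vertical edge by [b], whichever of the two edges is the incoming one. *)
Definition corner (w : 'I_n) (a b : R) : R * R :=
  (vx v w + a * (vx v (hnbr v w) - vx v w), vy v w + b * (vy v (vnbr v w) - vy v w)).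

Hypothesis rect : rectilinear v.

Lemma convex_vertexE w : convex_vertex v w <->
  exists2 eps, 0 < eps & forall a b, 0 < a < eps -> 0 < b < eps -> interior v (corner w a b).
Proof.
rewrite /convex_vertex /corner /hnbr /vnbr; case vw: (vertb v w).
  have eS : vx v (ordS w) = vx v w by apply/esym/eqP.
  have : horizb v (ord_pred w) by rewrite (horizbNvertb rect) (vertb_pred rect) vw.
  rewrite /horizb ord_predK => /eqP eP.
  by split=> -[eps e0 h]; exists eps => // a b ha hb; move: (h a b ha hb);
    rewrite eS eP !subrr !mulr0 !addr0.
have /eqP eS : horizb v w by rewrite (horizbNvertb rect) vw.
have : vertb v (ord_pred w) by rewrite (vertb_pred rect) vw.
rewrite /vertb ord_predK => /eqP eP.
by split=> -[eps e0 h]; exists eps => // a b ha hb; move: (h b a hb ha);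
  rewrite eS eP !subrr !mulr0 !addr0.
Qed.

Variable d : R.
Hypothesis gd : coord_gap v d.

Lemma convex_corner w M : convex_vertex v w -> 0 < M -> exists a b, [/\ 0 < a, 0 < b,
  - M < a * (vx v (hnbr v w) - vx v w) < M, - M < b * (vy v (vnbr v w) - vy v w) < M &
  interior v (corner w a b)].
Proof.
move=> /convex_vertexE [eps eps0 hint] M0.
have [ea ea0 ha] := small_scale (vx v (hnbr v w) - vx v w) M0.
have [eb eb0 hb] := small_scale (vy v (vnbr v w) - vy v w) M0.
have [a [a0 a1 a2]] := exists_lt2 eps0 ea0.
have [b [b0 b1 b2]] := exists_lt2 eps0 eb0.
exists a, b; split => //; [apply: ha | apply: hb | apply: hint]; by apply/andP.
Qed.

Lemma corner_y_in_span w a b : 0 < b -> - d < b * (vy v (vnbr v w) - vy v w) < d ->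
  Num.min (vy v w) (vy v (vnbr v w)) < (corner w a b).2 < Num.max (vy v w) (vy v (vnbr v w)).
Proof.
move=> b0 /andP [h1 h2]; have [_ _ gy] := gd; rewrite /corner /=; apply/in_minmaxP.
case: (ltrgtP (vy v w) (vy v (vnbr v w))) => h; last by case: (vnbr_y rect (w := w)).
  have := gy _ _ h; have : 0 < b * (vy v (vnbr v w) - vy v w) by apply: mulr_gt0; lra.
  by left; apply/andP; split; lra.
have := gy _ _ h; have : b * (vy v (vnbr v w) - vy v w) < 0 by rewrite pmulr_rlt0 //; lra.
by right; apply/andP; split; lra.
Qed.

Lemma corner_y_straddle w a b : 0 < b -> - d < b * (vy v (vnbr v w) - vy v w) < d ->
  (vy v w <= (corner w a b).2) (+) (vy v (vnbr v w) <= (corner w a b).2).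
Proof.
by move=> b0 /(corner_y_in_span a b0) /andP [h1 h2]; rewrite -in_minmax_addb (ltW h1) h2.
Qed.

End ConvexCorner.

Section LeftOutside.
Variables (R : realFieldType) (n : nat) (v : 'I_n -> R * R).

Definition in_vspan (i : 'I_n) (y : R) : bool :=
  Num.min (vy v i) (vy v (ordS i)) < y < Num.max (vy v i) (vy v (ordS i)).

Lemma in_vspan_vedge w y :
  in_vspan (vedge v w) y = (Num.min (vy v w) (vy v (vnbr v w)) < y < Num.max (vy v w) (vy v (vnbr v w))).
Proof. by rewrite /in_vspan; case: (vedge_ends v w) => -[-> ->] //; rewrite minC maxC. Qed.

Hypotheses (rect : rectilinear v) (simp : simple_polygon v).

Lemma vnbrK w : vnbr v (vnbr v w) = w.
Proof.
rewrite /vnbr; case vw: (vertb v w).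
  by have := vertb_pred rect (ordS w); rewrite ordSK vw => /esym/negbTE ->.
by rewrite (vertb_pred rect) vw ord_predK.
Qed.

Lemma vedge_vnbr w : vedge v (vnbr v w) = vedge v w.
Proof.
rewrite /vedge /vnbr; case vw: (vertb v w).
  by have := vertb_pred rect (ordS w); rewrite ordSK vw => /esym/negbTE ->.
by rewrite (vertb_pred rect) vw.
Qed.

Lemma vedge_low_end i : vertb v i -> exists w, vedge v w = i /\ vy v w < vy v (vnbr v w).
Proof.
move=> vi; have vni : vnbr v i = ordS i by rewrite /vnbr vi.
case: (ltrgtP (vy v i) (vy v (ordS i))) => h.
- by exists i; rewrite vedge_id // vni.
- by exists (vnbr v i); rewrite vedge_vnbr vedge_id // vnbrK vni.
by move/(vertbP rect): vi => [_].
Qed.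

Lemma in_vspan_mid i : vertb v i -> in_vspan i ((vy v i + vy v (ordS i)) / 2).
Proof.
move=> /(vertbP rect) [_ ne]; apply/in_minmaxP.
by case: (ltrgtP (vy v i) (vy v (ordS i))) => // h; [left|right]; apply/andP; split; lra.
Qed.

Lemma on_edge_in_vspan i y : vertb v i -> in_vspan i y -> on_edge v (vx v i, y) i.
Proof.
move=> vi /in_minmaxP yi; apply: (between_on_edge rect) => /=.
  by rewrite -(eqP vi); left; rewrite lexx.
by case: yi => /andP [h1 h2]; [left|right]; rewrite (ltW h1) (ltW h2).
Qed.

Lemma on_vedge_unique i y f : vertb v i -> in_vspan i y -> on_edge v (vx v i, y) f -> f = i.
Proof.
move=> vi yi yf; case: (f =P i) => // fi.
by case: (on_two_edges simp (on_edge_in_vspan vi yi) yf fi) => /(congr1 snd);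
  rewrite vertexE /= => ey; move/in_minmaxP: yi => -[] /andP []; rewrite ey ltxx.
Qed.

Variable d : R.
Hypothesis gd : coord_gap v d.

Lemma on_edge_shift_right f w r y : 0 < r < d -> on_edge v (vx v w - r, y) f ->
  horizb v f /\ on_edge v (vx v w, y) f.
Proof.
move=> r0d /on_edge_between [/= bx b_y]; case: (rect f) => -[[ef _] _].
  rewrite -ef in bx; move/andP: r0d => [r0 rd].
  have := gap_vx gd (u := f) (w := w); rewrite -(between_id bx) => /(_ ltac:(lra) ltac:(lra)).
  lra.
split; first exact/eqP.
by apply: (between_on_edge rect) => //=; apply: (gap_between_vx gd r0d bx).
Qed.

Lemma not_boundary_left_of_vedge i t y : vertb v i -> 0 < t < d -> in_vspan i y ->
  ~ boundary v (vx v i - t, y).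
Proof.
move=> vi t0d yi [f /(on_edge_shift_right t0d) [hf yf]].
by move: hf; rewrite (on_vedge_unique vi yi yf) (horizbNvertb rect) vi.
Qed.

Lemma xorsum_vmove_near_vedge i x y1 y2 : vertb v i -> vx v i - d < x -> x < vx v i + d ->
  in_vspan i y1 -> in_vspan i y2 ->
  xorsum (lower_right v (x, y1)) = xorsum (lower_right v (x, y2)).
Proof.
move=> vi xl xr; wlog le12 : y1 y2 / y1 <= y2 => [sym|y1i y2i].
  by case: (lerP y1 y2) => [|/ltW] h y1i y2i; [apply: sym | symmetry; apply: sym].
rewrite (xorsum_vmove rect _ le12) [X in _ (+) X]xorsum_pred0 ?addbF // => f /=.
apply/negbTE/negP => /andP [/andP [hf /andP [f1 f2]] st].
have fi : in_vspan i (vy v f).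
  by move: y1i y2i; rewrite /in_vspan => /andP [? ?] /andP [? ?]; apply/andP; split; lra.
have yf : on_edge v (vx v i, vy v f) f.
  apply: (between_on_edge rect) => /=; first exact (straddle_vx gd st xl xr).
  by rewrite -(eqP hf); left; rewrite lexx.
by move: hf; rewrite (on_vedge_unique vi fi yf) (horizbNvertb rect) vi.
Qed.

Lemma left_outside_left_turn w : convex_vertex v w -> vx v (hnbr v w) < vx v w ->
  ~ left_outside v (vedge v w).
Proof.
move=> cw hlt [eps eps0 lo].
have [M [M0 Meps Md]] := exists_lt2 eps0 (gap_gt0 gd).
have [a [b [a0 b0 /andP [ha1 ha2] /andP [hb1 hb2] wab]]] := convex_corner rect cw M0.
have adx : a * (vx v (hnbr v w) - vx v w) < 0 by rewrite pmulr_rlt0 // subr_lt0.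
have bi : in_vspan (vedge v w) (corner v w a b).2.
  by rewrite in_vspan_vedge; apply: (corner_y_in_span rect gd) => //; apply/andP; split; lra.
apply: (lo (- (a * (vx v (hnbr v w) - vx v w))) (corner v w a b).2 _ bi).
  by apply/andP; split; lra.
by right; rewrite (vedge_x rect) opprK.
Qed.

Lemma left_outside_right_turn w : convex_vertex v w -> vx v w < vx v (hnbr v w) ->
  left_outside v (vedge v w).
Proof.
move=> cw hgt; have d0 := gap_gt0 gd.
have [a [b [a0 b0 /andP [ha1 ha2] hb wab]]] := convex_corner rect cw d0.
have adx : 0 < a * (vx v (hnbr v w) - vx v w) by rewrite mulr_gt0 // subr_gt0.
have vi := vedge_vert rect w; have ix := vedge_x rect w.
have bi : in_vspan (vedge v w) (corner v w a b).2.
  by rewrite in_vspan_vedge; apply: (corner_y_in_span rect gd).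
have /andP [hb1 hb2] := hb.
exists d => // t y /andP [t0 td] yi.
have parity : xorsum (lower_right v (vx v (vedge v w) - t, y)) = false.
  rewrite (xorsum_vmove_near_vedge vi _ _ yi bi) ?ix; try lra.
  rewrite (xorsum_cross_vedge rect simp gd (w := w) (x2 := (corner v w a b).1)); try by rewrite /corner /=; lra.
  by have [_ ->] := (interiorE rect _).1 wab; rewrite (corner_y_straddle rect gd a b0 hb).
case=> [|/(interiorE rect) [_]]; last by rewrite parity.
by apply: not_boundary_left_of_vedge; rewrite ?t0.
Qed.

Lemma left_outside_vedgeE w : convex_vertex v w ->
  left_outside v (vedge v w) <-> vx v w < vx v (hnbr v w).
Proof.
move=> cw; split=> [lo|]; last exact: left_outside_right_turn.
case: (ltrgtP (vx v w) (vx v (hnbr v w))) => // h.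
  by case: (left_outside_left_turn cw h lo).
by case: (hnbr_x rect (w := w)).
Qed.

Lemma xorsum_left_of_vertices p : (forall u, p.1 < vx v u) -> xorsum (lower_right v p) = false.
Proof.
move=> pl; rewrite -(xorsum_vy rect (fun a => a <= p.2)); apply: eq_xorsum => u.
by rewrite /lower_right pl.
Qed.

Lemma convex_of_min_vx w : (forall u, vx v w <= vx v u) -> convex_vertex v w.
Proof.
move=> wmin; have d0 := gap_gt0 gd.
have hgt : vx v w < vx v (hnbr v w).
  by rewrite lt_neqAle wmin andbT; apply/eqP => /esym; apply: hnbr_x.
apply/(convex_vertexE rect).
have [ea ea0 ha] := small_scale (vx v (hnbr v w) - vx v w) d0.
have [eb eb0 hb] := small_scale (vy v (vnbr v w) - vy v w) d0.
have [eps [eps0 ea' eb']] := exists_lt2 ea0 eb0.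
exists eps => // a b /andP [a0 a1] /andP [b0 b1].
have /andP [ha1 ha2] : - d < a * (vx v (hnbr v w) - vx v w) < d by apply: ha; rewrite a0; lra.
have hbd : - d < b * (vy v (vnbr v w) - vy v w) < d by apply: hb; rewrite b0; lra.
have adx : 0 < a * (vx v (hnbr v w) - vx v w) by rewrite mulr_gt0 // subr_gt0.
apply/(interiorE rect); split.
  apply: (near_vertex_not_boundary rect gd); rewrite ?ha1 ?ha2 //; first by rewrite gt_eqF.
  apply: mulf_neq0; first by rewrite gt_eqF.
  by rewrite subr_eq0; apply/eqP; exact: vnbr_y.
have left0 : xorsum (lower_right v (vx v w - d / 2, (corner v w a b).2)) = false.
  by apply: xorsum_left_of_vertices => u /=; have := wmin u; lra.
rewrite (xorsum_cross_vedge rect simp gd (w := w) (x2 := (corner v w a b).1)) in left0;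
  try by rewrite /corner /=; lra.
by move: left0; rewrite (corner_y_straddle rect gd a b0 hbd) addbT => /negbFE.
Qed.

Lemma knob_vedgeE w : knob v (vedge v w) <-> convex_vertex v w /\ convex_vertex v (vnbr v w).
Proof. by rewrite /knob; case: (vedge_ends v w) => -[-> ->]; last split=> -[]. Qed.

Lemma exists_left_knob : (0 < n)%N -> exists k, left_knob v k.
Proof.
move=> n0; have [u _ umin] := arg_minP (vx v) (isT : predT (Ordinal n0)).
have cu : convex_vertex v u by apply: convex_of_min_vx => u'; apply: umin.
exists (vedge v u); split; last split.
- apply/knob_vedgeE; split=> //; apply: convex_of_min_vx => u'.
  by rewrite vnbr_x //; apply: umin.
- exact/(vertbP rect)/vedge_vert.
apply/(left_outside_vedgeE cu); rewrite lt_neqAle umin // andbT.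
by apply/eqP => /esym; apply: hnbr_x.
Qed.

End LeftOutside.

Section LowerLeft.
Variables (R : realFieldType) (n : nat) (v : 'I_n -> R * R).
Hypotheses (rect : rectilinear v) (simp : simple_polygon v).
Variable d : R.
Hypothesis gd : coord_gap v d.

Lemma xorsum_not_inP p : ~ inP v p -> xorsum (lower_right v p) = false.
Proof.
move=> pNP; have pNb : ~ boundary v p by move=> pb; apply: pNP; left.
by apply: negbTE; apply: contra_notN pNP => pP; right; apply/(interiorE rect).
Qed.

Lemma not_inP_below_corner w s t : 0 < s < d -> 0 < t < d -> vx v w + s < vx v (hnbr v w) ->
  interior v (vx v w + s, vy v w + t) -> ~ inP v (vx v w + s, vy v w - d / 2).
Proof.
move=> /andP [s0 sd] /andP [t0 td] sx /(interiorE rect) [_ parity].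
have d0 := gap_gt0 gd; have d2 : 0 < d / 2 by lra.
case=> [|/(interiorE rect) [_]].
  apply: (near_vertex_not_boundary rect gd); first by rewrite gt_eqF.
  - by rewrite oppr_eq0 gt_eqF.
  - by apply/andP; split; lra.
  - by apply/andP; split; lra.
rewrite (xorsum_cross_hedge rect simp gd (w := w) (y2 := vy v w + t)); try lra.
by rewrite parity sx; have -> : (vx v w + s < vx v w) = false by apply/negbTE; rewrite -leNgt; lra.
Qed.

Lemma not_inP_left_of_vertex w r : 0 < r < d -> vx v w < vx v (hnbr v w) ->
  vy v w + d / 2 < vy v (vnbr v w) ->
  ~ inP v (vx v w - r, vy v w + d / 2) -> ~ inP v (vx v w - r, vy v w).
Proof.
move=> r0d w_right w_up out; have d0 := gap_gt0 gd.
have /andP [r0 rd] := r0d.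
case=> [[f fpt]|/(interiorE rect) [_]].
  have [hf wf] := on_edge_shift_right rect gd r0d fpt; rewrite -vertexE in wf.
  have [/= + _] := on_edge_between fpt; rewrite (hedge_unique rect simp hf wf).
  by case: (hedge_ends v w) => -[-> ->]; case=> /andP []; lra.
rewrite (xorsum_vmove rect _ (y2 := vy v w + d / 2)); last by lra.
rewrite (xorsum_not_inP out) [X in _ (+) X]xorsum_pred0 // => f /=.
apply/negbTE/negP => /andP [/andP [_ /andP [f1 f2]] _].
by have := gap_vy gd (u := f) (w := w) => /(_ ltac:(lra) ltac:(lra)); lra.
Qed.

Section BelowLeftGate.
Hypothesis oc : ortho_convex v.
Variables (w : 'I_n) (s r : R).
Hypotheses (w_low : vy v w < vy v (vnbr v w)) (w_right : vx v w < vx v (hnbr v w)).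
Hypotheses (s0d : 0 < s < d) (r0d : 0 < r < d).
Hypotheses (out_below : ~ inP v (vx v w + s, vy v w - d / 2))
           (out_left : ~ inP v (vx v w - r, vy v w)).

Lemma vert_edge_not_through_gate i : vertb v i -> vx v i < vx v w + s ->
  vy v i < vy v w -> vy v w <= vy v (ordS i) -> False.
Proof.
move=> vi ix iy iSy; have [_ gx _] := gd; have /andP [s0 sd] := s0d; have /andP [r0 rd] := r0d.
have wP : inP v (vx v w, vy v w) by apply: (inP_on_edge (i := w)); rewrite -vertexE; apply: on_edge_vertex.
have iw : on_edge v (vx v i, vy v w) i.
  apply: (between_on_edge rect) => /=; first by rewrite -(eqP vi); left; rewrite lexx.
  by left; rewrite (ltW iy) iSy.
case: (ltrgtP (vx v i) (vx v w)) => hx.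
- have gap_iw := gx _ _ hx; apply: out_left; case: oc => ocx _.
  by apply: (ocx _ _ _ _ (inP_on_edge iw) wP); apply/andP; split; lra.
- by have := gap_vx gd (u := i) (w := w) => /(_ ltac:(lra) ltac:(lra)); lra.
rewrite hx -vertexE in iw; move: iy iSy; rewrite (vedge_unique rect simp vi iw).
by case: (vedge_ends v w) => -[-> ->]; rewrite ?ltxx // => /(lt_trans w_low); rewrite ltxx.
Qed.

Lemma horiz_edge_not_through_gate i : horizb v i -> vx v i < vx v w + s ->
  vx v w + s <= vx v (ordS i) -> vy v i < vy v w -> False.
Proof.
move=> hi ix iSx iy; have [_ gx gy] := gd; have /andP [s0 sd] := s0d.
have gap_w := gx _ _ w_right; have gap_i := gy _ _ iy.
have ipt : on_edge v (vx v w + s, vy v i) i.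
  apply: (between_on_edge rect) => /=; first by left; rewrite (ltW ix) iSx.
  by rewrite -(eqP hi); left; rewrite lexx.
have wpt : on_edge v (vx v w + s, vy v w) (hedge v w).
  by apply: (on_hedge rect) => //=; left; apply/andP; split; lra.
apply: out_below; case: oc => _ ocy.
by apply: (ocy _ _ _ _ (inP_on_edge ipt) (inP_on_edge wpt)); apply/andP; split; lra.
Qed.

(* The boundary path from [u] to [w] leaves the quadrant left of [vx w + s] and below
   [vy w] through its top or its right side; orthogonal convexity then puts one of the two
   exterior points into P. *)
Lemma no_vertex_below_left_of_gate u : vx v u <= vx v w -> vy v u < vy v w -> False.
Proof.
move=> ux uy; have /andP [s0 _] := s0d.
pose gate u := (vx v u < vx v w + s) && (vy v u < vy v w).
have gate_u : gate u by rewrite /gate uy andbT; lra.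
have gate_w : ~~ gate w by rewrite /gate ltxx andbF.
have [i /andP [/andP [ix iy] iS]] := ordS_exit gate_u gate_w.
case: (rect i) => -[[e _] _].
  apply: (vert_edge_not_through_gate (introT eqP e) ix iy).
  by move: iS; rewrite /gate -e ix /= -leNgt.
apply: (horiz_edge_not_through_gate (introT eqP e) ix _ iy).
by move: iS; rewrite /gate -e iy andbT -leNgt.
Qed.

End BelowLeftGate.

Lemma left_knob_lower_end w u : ortho_convex v -> left_knob v (vedge v w) ->
  vy v w < vy v (vnbr v w) -> vx v u <= vx v w -> vy v w <= vy v u.
Proof.
move=> oc [/knob_vedgeE [cw _] [_ lo]] w_low ux; rewrite leNgt; apply/negP => uy.
have w_right := (left_outside_vedgeE rect simp gd cw).1 lo.
have d0 := gap_gt0 gd; have [_ gx gy] := gd.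
have gap_x := gx _ _ w_right; have gap_y := gy _ _ w_low.
have [a [b [a0 b0 /andP [ha1 ha2] /andP [hb1 hb2] wab]]] := convex_corner rect cw d0.
have adx : 0 < a * (vx v (hnbr v w) - vx v w) by rewrite mulr_gt0 // subr_gt0.
have bdy : 0 < b * (vy v (vnbr v w) - vy v w) by rewrite mulr_gt0 // subr_gt0.
have s0d : 0 < a * (vx v (hnbr v w) - vx v w) < d by rewrite adx ha2.
have out_below := not_inP_below_corner (w := w) s0d (introT andP (conj bdy hb2)) ltac:(lra) wab.
have [eps eps0 lo'] := lo.
have [r [r0 re rd]] := exists_lt2 eps0 d0.
have r0d : 0 < r < d by rewrite r0 rd.
have out_left : ~ inP v (vx v w - r, vy v w).
  apply: (not_inP_left_of_vertex r0d w_right); first by lra.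
  rewrite -(vedge_x rect w); apply: lo'; first by rewrite r0 re.
  by rewrite -/(in_vspan v _ _) in_vspan_vedge; apply/in_minmaxP; left; apply/andP; split; lra.
exact: (no_vertex_below_left_of_gate oc w_low w_right s0d r0d out_below out_left ux uy).
Qed.

End LowerLeft.

Section Flip.
Variables (R : realFieldType) (n : nat) (v : 'I_n -> R * R).

Definition flipv : 'I_n -> R * R := fun i => ((v i).1, - (v i).2).
Local Notation vf := flipv.

Lemma vx_flip i : vx vf i = vx v i. Proof. by []. Qed.
Lemma vy_flip i : vy vf i = - vy v i. Proof. by []. Qed.
Lemma vedge_flip : vedge vf =1 vedge v. Proof. by []. Qed.
Lemma vnbr_flip : vnbr vf =1 vnbr v. Proof. by []. Qed.

Lemma on_edge_flip p i : on_edge vf p i <-> on_edge v (p.1, - p.2) i.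
Proof.
case: p => x y; rewrite /on_edge /vx /vy /flipv /=.
split=> -[t [t01 e]]; exists t; split => //.
  by case: e => -> ->; congr pair; ring.
by case: e => -> e2; congr pair; rewrite -[y]opprK e2; ring.
Qed.

Lemma boundary_flip p : boundary vf p <-> boundary v (p.1, - p.2).
Proof. by split=> -[i h]; exists i; apply/on_edge_flip. Qed.

Lemma vert_edge_flip i : vert_edge vf i <-> vert_edge v i.
Proof.
rewrite /vert_edge /vx /vy /flipv /=; split=> -[h1 h2]; split => // e; apply: h2.
  by rewrite e.
exact: oppr_inj.
Qed.

Lemma horiz_edge_flip i : horiz_edge vf i <-> horiz_edge v i.
Proof.
rewrite /horiz_edge /vx /vy /flipv /=; split=> -[e h]; split => //.
  exact: oppr_inj.
by rewrite e.
Qed.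

Hypothesis rect : rectilinear v.

Lemma rectilinear_flip : rectilinear vf.
Proof.
move=> i; case: (rect i) => -[h1 h2]; [left|right]; split;
  by rewrite ?vert_edge_flip ?horiz_edge_flip.
Qed.

Lemma interior_flip p : interior vf p <-> interior v (p.1, - p.2).
Proof.
rewrite (interiorE rectilinear_flip) (interiorE rect) boundary_flip.
suff E : ~ boundary v (p.1, - p.2) -> xorsum (lower_right vf p) = xorsum (lower_right v (p.1, - p.2)).
  by split=> -[pNb hx]; split => //; rewrite ?E // -?E.
move=> pNb; rewrite -(xorsum_lower_right_strict rect pNb) /= -(xorsum_upper_right rect).
by apply: eq_xorsum => u; rewrite /lower_right /vx /vy /flipv /= lerNl.
Qed.

Lemma inP_flip p : inP vf p <-> inP v (p.1, - p.2).
Proof. by rewrite /inP boundary_flip interior_flip. Qed.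

Lemma simple_polygon_flip : simple_polygon v -> simple_polygon vf.
Proof.
move=> sv i j [x y] ne /on_edge_flip h1 /on_edge_flip h2.
by case: (sv i j _ ne h1 h2) => -[e1 e2]; [left|right]; split => //; rewrite /flipv -e2 /= opprK.
Qed.

Lemma ortho_convex_flip : ortho_convex v -> ortho_convex vf.
Proof.
move=> [oh ov]; split=> c a1 a2 a; rewrite !inP_flip /=; first exact: oh.
by move=> h1 h2 /andP [l1 l2]; apply: (ov c _ _ _ h2 h1); rewrite !lerN2 l1 l2.
Qed.

Lemma coord_gap_flip d : coord_gap v d -> coord_gap vf d.
Proof.
case=> d0 gx gy; split => // u u'; rewrite /vy /flipv /= ltrN2 => h.
by have := gy _ _ h; rewrite /vy; lra.
Qed.

Lemma convex_vertex_flip x : convex_vertex vf x <-> convex_vertex v x.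
Proof.
rewrite /convex_vertex.
have E (s t a b c : R) : - (- a + s * (- b - - a) + t * (- c - - a)) = a + s * (b - a) + t * (c - a).
  by ring.
split=> -[e e0 h]; exists e => // s t hs ht.
  by move: (h s t hs ht) => /interior_flip; rewrite /vx /vy /flipv /= E.
by apply/interior_flip; rewrite /vx /vy /flipv /= E; apply: h.
Qed.

Lemma left_outside_flip i : left_outside vf i <-> left_outside v i.
Proof.
rewrite /left_outside; split=> -[e e0 h]; exists e => // t y ht hy.
  move: (h t (- y) ht); rewrite /vy /flipv /= => /(_ (in_minmaxN hy)).
  by rewrite inP_flip /= opprK.
move: hy; rewrite /vy /flipv /= => /in_minmaxN; rewrite !opprK => hy.
by rewrite inP_flip /=; apply: h.
Qed.

Lemma left_knob_flip i : left_knob vf i <-> left_knob v i.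
Proof. by rewrite /left_knob /knob !convex_vertex_flip vert_edge_flip left_outside_flip. Qed.

End Flip.

Section LeftKnobUnique.
Variables (R : realFieldType) (n : nat) (v : 'I_n -> R * R).
Hypotheses (rect : rectilinear v) (simp : simple_polygon v) (oc : ortho_convex v).
Variable d : R.
Hypothesis gd : coord_gap v d.

Lemma left_knob_vspan_sub j k : left_knob v j -> left_knob v k -> vx v j <= vx v k ->
  forall y, in_vspan v j y -> in_vspan v k y.
Proof.
move=> lj lk jk y.
have [_ [/(vertbP rect) vj _]] := lj; have [_ [/(vertbP rect) vk _]] := lk.
have [wj [wjE wj_low]] := vedge_low_end rect vj.
have [wk [wkE wk_low]] := vedge_low_end rect vk.
have low : vy v wk <= vy v wj.
  apply: (left_knob_lower_end rect simp gd oc) => //; first by rewrite wkE.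
  by rewrite -(vedge_x rect wj) -(vedge_x rect wk) wjE wkE.
(* The upper end of a left knob is its lower end in the reflected polygon. *)
have up : vy v (vnbr v wj) <= vy v (vnbr v wk).
  rewrite -lerN2; apply: (left_knob_lower_end (rectilinear_flip rect)
    (simple_polygon_flip simp) (coord_gap_flip gd) (ortho_convex_flip rect oc)
    (w := vnbr v wk) (u := vnbr v wj)).
  - by apply/(left_knob_flip rect); rewrite vedge_flip (vedge_vnbr rect) wkE.
  - by rewrite vnbr_flip (vnbrK rect) !vy_flip ltrN2.
  - by rewrite !vx_flip !(vnbr_x rect) -(vedge_x rect wj) -(vedge_x rect wk) wjE wkE.
rewrite -wjE -wkE !in_vspan_vedge => /in_minmaxP yj; apply/in_minmaxP; left.
by case: yj => /andP [] *; apply/andP; split; lra.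
Qed.

Lemma left_knob_eq j k : left_knob v j -> left_knob v k -> vx v j <= vx v k -> j = k.
Proof.
move=> lj lk jk.
have [_ [/(vertbP rect) vj _]] := lj; have [_ [/(vertbP rect) vk [eps eps0 lo]]] := lk.
have yj := in_vspan_mid rect vj; have yk := left_knob_vspan_sub lj lk jk yj.
case: (ltrgtP (vx v j) (vx v k)) => hx.
- have [t [t0 te tjk]] := exists_lt2 eps0 (ltac:(by rewrite subr_gt0) : 0 < vx v k - vx v j).
  case: (lo t _ (introT andP (conj t0 te)) yk); case: oc => ocx _.
  apply: (ocx _ _ _ _ (inP_on_edge (on_edge_in_vspan rect vj yj))
                      (inP_on_edge (on_edge_in_vspan rect vk yk))).
  by apply/andP; split; lra.
- by move: jk; rewrite leNgt hx.
by apply: (on_vedge_unique rect simp vk yk); rewrite -hx; apply: on_edge_in_vspan.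
Qed.

End LeftKnobUnique.

Section Rotate.
Variables (R : realFieldType) (n : nat) (v : 'I_n -> R * R).

Definition rotv : 'I_n -> R * R := fun i => (- (v i).2, (v i).1).
Local Notation vr := rotv.

Lemma vx_rot i : vx vr i = - vy v i. Proof. by []. Qed.
Lemma vy_rot i : vy vr i = vx v i. Proof. by []. Qed.

Lemma on_edge_rot p i : on_edge vr p i <-> on_edge v (p.2, - p.1) i.
Proof.
case: p => x y; rewrite /on_edge /vx /vy /rotv /=.
split=> -[t [t01 e]]; exists t; split => //.
  by case: e => -> ->; congr pair; ring.
by case: e => -> e2; congr pair; rewrite -[x]opprK e2; ring.
Qed.

Lemma boundary_rot p : boundary vr p <-> boundary v (p.2, - p.1).
Proof. by split=> -[i h]; exists i; apply/on_edge_rot. Qed.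

Lemma vert_edge_rot i : vert_edge vr i <-> horiz_edge v i.
Proof.
rewrite /vert_edge /horiz_edge !vx_rot !vy_rot; split=> -[h1 h2]; split => //.
  exact: oppr_inj.
by rewrite h1.
Qed.

Lemma horiz_edge_rot i : horiz_edge vr i <-> vert_edge v i.
Proof.
rewrite /vert_edge /horiz_edge !vx_rot !vy_rot; split=> -[h1 h2]; split => // e; apply: h2.
  by rewrite e.
exact: oppr_inj.
Qed.

Lemma simple_polygon_rot : simple_polygon v -> simple_polygon vr.
Proof.
move=> sv i j [x y] ne /on_edge_rot h1 /on_edge_rot h2.
by case: (sv i j _ ne h1 h2) => -[e1 e2]; [left|right]; split => //; rewrite /rotv -e2 /= opprK.
Qed.

Hypothesis rect : rectilinear v.

Lemma rectilinear_rot : rectilinear vr.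
Proof.
move=> i; case: (rect i) => -[h1 h2]; [right|left]; split;
  by rewrite ?vert_edge_rot ?horiz_edge_rot.
Qed.

Lemma interior_rot p : interior vr p <-> interior v (p.2, - p.1).
Proof.
rewrite (interiorE rectilinear_rot) (interiorE rect) boundary_rot.
suff E : ~ boundary v (p.2, - p.1) -> xorsum (lower_right vr p) = xorsum (lower_right v (p.2, - p.1)).
  by split=> -[pNb hx]; split => //; rewrite ?E // -?E.
move=> pNb; rewrite -(xorsum_lower_right_strict rect pNb) /= -(xorsum_lower_left rect).
by apply: eq_xorsum => u; rewrite /lower_right vx_rot vy_rot /= ltrNr andbC.
Qed.

Lemma inP_rot p : inP vr p <-> inP v (p.2, - p.1).
Proof. by rewrite /inP boundary_rot interior_rot. Qed.

Lemma ortho_convex_rot : ortho_convex v -> ortho_convex vr.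
Proof.
move=> [oh ov]; split=> c a1 a2 a; rewrite !inP_rot /=; last exact: oh.
by move=> h1 h2 /andP [l1 l2]; apply: (ov c _ _ _ h2 h1); rewrite !lerN2 l1 l2.
Qed.

Lemma convex_vertex_rot x : convex_vertex vr x <-> convex_vertex v x.
Proof.
rewrite /convex_vertex.
have E (s t a b c : R) : - (- a + s * (- b - - a) + t * (- c - - a)) = a + s * (b - a) + t * (c - a).
  by ring.
split=> -[e e0 h]; exists e => // s t hs ht.
  by move: (h s t hs ht) => /interior_rot; rewrite /= !vx_rot !vy_rot E.
by apply/interior_rot; rewrite /= !vx_rot !vy_rot E; apply: h.
Qed.

Lemma knob_rot i : knob vr i <-> knob v i.
Proof. by rewrite /knob !convex_vertex_rot. Qed.

Lemma left_outside_rot i : left_outside vr i <-> above_outside v i.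
Proof.
have E (a b : R) : - (- a - b) = a + b by ring.
rewrite /left_outside /above_outside; split=> -[e e0 h]; exists e => // t y ht hy.
  by move: (h t y ht); rewrite !vy_rot => /(_ hy); rewrite inP_rot /= vx_rot E.
by rewrite inP_rot /= vx_rot E; apply: h.
Qed.

Lemma left_knob_rot i : left_knob vr i <-> top_knob v i.
Proof. by rewrite /left_knob /top_knob knob_rot vert_edge_rot left_outside_rot. Qed.

Lemma right_knob_rot i : right_knob vr i <-> bottom_knob v i.
Proof. by rewrite /right_knob /bottom_knob knob_rot vert_edge_rot left_outside_rot. Qed.

End Rotate.

Lemma ocp_rot (R : realFieldType) (n : nat) (v : 'I_n -> R * R) :
  orthogonally_convex_polygon v -> orthogonally_convex_polygon (rotv v).
Proof.
case=> n4 [rv [sv ov]]; split => //; split; first exact: rectilinear_rot.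
by split; [apply: simple_polygon_rot | apply: ortho_convex_rot].
Qed.

Lemma ocp_left_knob_unique (R : realFieldType) (n : nat) (v : 'I_n -> R * R) :
  orthogonally_convex_polygon v -> exists! k, left_knob v k.
Proof.
case=> n4 [rect [simp oc]]; have [d gd] := coord_gap_exists v.
have [k lk] := exists_left_knob rect simp gd (leq_trans (isT : (0 < 4)%N) n4).
exists k; split => // k' lk'.
case: (lerP (vx v k) (vx v k')) => h; first exact: (left_knob_eq rect simp oc gd).
exact/esym/(left_knob_eq rect simp oc gd lk' lk (ltW h)).
Qed.

Section HalfTurn.
Variables (R : realFieldType) (n : nat) (v : 'I_n -> R * R).
Hypotheses (rect : rectilinear v) (simp : simple_polygon v).
Local Notation vh := (rotv (rotv v)).

Lemma vertb_rot2 : vertb vh =1 vertb v.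
Proof. by move=> i; rewrite /vertb !vx_rot !vy_rot eqr_opp. Qed.

Lemma hnbr_rot2 : hnbr vh =1 hnbr v.
Proof. by move=> i; rewrite /hnbr vertb_rot2. Qed.

Lemma left_outside_rot2 i : convex_vertex v i -> vertb v i ->
  left_outside vh i <-> ~ left_outside v i.
Proof.
move=> ci vi.
have rect2 := rectilinear_rot (rectilinear_rot rect).
have simp2 := simple_polygon_rot (simple_polygon_rot simp).
have [d gd] := coord_gap_exists v; have [d2 gd2] := coord_gap_exists vh.
have ci2 : convex_vertex vh i by rewrite (convex_vertex_rot (rectilinear_rot rect)) convex_vertex_rot.
have vi2 : vertb vh i by rewrite vertb_rot2.
have E2 : left_outside vh i <-> vx vh i < vx vh (hnbr vh i).
  by rewrite -{1}(vedge_id vi2); apply: (left_outside_vedgeE rect2 simp2 gd2 ci2).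
have E1 : left_outside v i <-> vx v i < vx v (hnbr v i).
  by rewrite -{1}(vedge_id vi); apply: (left_outside_vedgeE rect simp gd ci).
rewrite E2 E1 hnbr_rot2 !vx_rot !vy_rot ltrN2; split=> [lt /(lt_trans lt)|]; first by rewrite ltxx.
case: (ltrgtP (vx v i) (vx v (hnbr v i))) => // h _.
by case: (hnbr_x rect (w := i)).
Qed.

Lemma right_knob_rot2 i : right_knob v i <-> left_knob vh i.
Proof.
have rect1 := rectilinear_rot rect.
rewrite /right_knob /left_knob (knob_rot rect1) (knob_rot rect) vert_edge_rot horiz_edge_rot.
split=> -[ki [vi lo]]; have ci : convex_vertex v i by case: ki.
  by do !split => //; apply/(left_outside_rot2 ci); first apply/(vertbP rect).
by do !split => //; apply/(left_outside_rot2 ci) => //; apply/(vertbP rect).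
Qed.

End HalfTurn.

Lemma iff_ex_uniq (T : Type) (P Q : T -> Prop) :
  (forall i, P i <-> Q i) -> (exists! i, Q i) -> exists! i, P i.
Proof. by move=> PQ [k [Qk Qu]]; exists k; split=> [|k' /PQ]; [apply/PQ | apply: Qu]. Qed.

Lemma ocp_right_knob_unique (R : realFieldType) (n : nat) (v : 'I_n -> R * R) :
  orthogonally_convex_polygon v -> exists! k, right_knob v k.
Proof.
move=> ocp; have [_ [rect [simp _]]] := ocp.
apply: (iff_ex_uniq (right_knob_rot2 rect simp)).
exact: ocp_left_knob_unique (ocp_rot (ocp_rot ocp)).
Qed.

Theorem lemma6p17 (R : realFieldType) (n : nat) (v : 'I_n -> R * R) :
  orthogonally_convex_polygon v ->
  (exists! i : 'I_n, left_knob v i) /\ (exists! i : 'I_n, right_knob v i) /\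
  (exists! i : 'I_n, top_knob v i) /\ (exists! i : 'I_n, bottom_knob v i).
Proof.
move=> ocp; have [_ [rect _]] := ocp.
split; first exact: ocp_left_knob_unique.
split; first exact: ocp_right_knob_unique.
split.
  apply: (iff_ex_uniq (fun i => iff_sym (left_knob_rot rect i))).
  exact: ocp_left_knob_unique (ocp_rot ocp).
apply: (iff_ex_uniq (fun i => iff_sym (right_knob_rot rect i))).
exact: ocp_right_knob_unique (ocp_rot ocp).
Qed.
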